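(* Let $V$ be a vector space and let $\Phi_1,\Phi_2:\mathcal{P}(V)\to[0,\infty]$ satisfy, for $i=1,2$: (1) $\Phi_i(\lambda A)=|\lambda|\Phi_i(A)$ for all $A\subseteq V$, $\lambda\in\mathbb{R}$; (2) $A\subseteq B\subseteq V$ implies $\Phi_i(A)\le\Phi_i(B)$; (3) $\Phi_i(\bigcup_{n=1}^\infty A_n)\le\sum_{n=1}^\infty\Phi_i(A_n)$ for all $A_1,A_2,\ldots\subseteq V$. If for every $n\ge1$ there is a subset $B_n\subseteq V$ with $\Phi_1(B_n)\le1$ and $\Phi_2(B_n)\ge c_n$, where $c_n\uparrow\infty$, then there exists a set $A\subseteq V$ with $\Phi_1(A)\le1$ and $\Phi_2(A)=\infty$.
   Context: $\mathcal{P}(V)$ denotes the power set of $V$; $\lambda A=\{\lambda a:a\in A\}$. *)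

From Stdlib Require Import Reals.
Open Scope R_scope.

Record is_vector_space (V : Type) (vzero : V) (vadd : V -> V -> V)
  (vopp : V -> V) (vscal : R -> V -> V) : Prop := {
  vs_addA : forall x y z, vadd x (vadd y z) = vadd (vadd x y) z;
  vs_addC : forall x y, vadd x y = vadd y x;
  vs_add0 : forall x, vadd x vzero = x;
  vs_addN : forall x, vadd x (vopp x) = vzero;
  vs_scalA : forall a b x, vscal a (vscal b x) = vscal (a * b) x;
  vs_scal1 : forall x, vscal 1 x = x;
  vs_scalDr : forall a x y, vscal a (vadd x y) = vadd (vscal a x) (vscal a y);
  vs_scalDl : forall a b x, vscal (a + b) x = vadd (vscal a x) (vscal b x)
}.

Definition subset {V : Type} (A B : V -> Prop) : Prop := forall v, A v -> B v.
Definition bigUnion {V : Type} (A : nat -> V -> Prop) : V -> Prop :=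
  fun v => exists n, A n v.
Definition scale_set {V : Type} (vscal : R -> V -> V) (l : R) (A : V -> Prop)
  : V -> Prop := fun v => exists a, A a /\ v = vscal l a.

(* Extended reals: finite values or +infinity (we only use the part [0,oo]). *)
Inductive ER : Type := Fin (x : R) | Inf.

Definition ER_le (x y : ER) : Prop :=
  match x, y with
  | _, Inf => True
  | Inf, Fin _ => False
  | Fin a, Fin b => a <= b
  end.

Definition ER_add (x y : ER) : ER :=
  match x, y with
  | Fin a, Fin b => Fin (a + b)
  | _, _ => Inf
  end.

(* scaling by a nonnegative real, with the convention 0 * oo = 0 *)
Definition ER_scale (r : R) (x : ER) : ER :=
  match x with
  | Fin a => Fin (r * a)
  | Inf => if Req_EM_T r 0 then Fin 0 else Inf
  end.

Fixpoint ER_psum (f : nat -> ER) (N : nat) : ER :=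
  match N with
  | O => Fin 0
  | S N' => ER_add (ER_psum f N') (f N')
  end.

Definition ER_is_sup (S : ER -> Prop) (s : ER) : Prop :=
  (forall x, S x -> ER_le x s) /\
  (forall u, (forall x, S x -> ER_le x u) -> ER_le s u).

Definition ER_series (f : nat -> ER) (s : ER) : Prop :=
  ER_is_sup (fun x => exists N, x = ER_psum f N) s.

Definition admissible {V : Type} (vscal : R -> V -> V)
  (Phi : (V -> Prop) -> ER) : Prop :=
  (forall A, ER_le (Fin 0) (Phi A)) /\
  (forall (A : V -> Prop) (l : R),
      Phi (scale_set vscal l A) = ER_scale (Rabs l) (Phi A)) /\
  (forall A B : V -> Prop, subset A B -> ER_le (Phi A) (Phi B)) /\
  (forall (A : nat -> V -> Prop) (s : ER),
      ER_series (fun n => Phi (A n)) s -> ER_le (Phi (bigUnion A)) s).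

From Stdlib Require Import Reals Lra Lia ClassicalEpsilon.
Open Scope R_scope.

(* Choose [n_k] with [c (n_k) >= 2^(k+1) k] and put [A = U_k 2^-(k+1) B (n_k)].
   Countable subadditivity and homogeneity give [Phi1 A <= sum_k 2^-(k+1) = 1],
   while monotonicity gives [Phi2 A >= 2^-(k+1) c (n_k) >= k] for every [k]. *)

Lemma ER_le_trans (x y z : ER) : ER_le x y -> ER_le y z -> ER_le x z.
Proof. destruct x, y, z; simpl; intros; auto; try lra; contradiction. Qed.

Lemma ER_add_le_Fin (x y : ER) (a b : R) :
  ER_le x (Fin a) -> ER_le y (Fin b) -> ER_le (ER_add x y) (Fin (a + b)).
Proof. destruct x, y; simpl; intros; auto; lra. Qed.

Lemma ER_scale_le_Fin (l a : R) (x : ER) :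
  0 <= l -> ER_le x (Fin a) -> ER_le (ER_scale l x) (Fin (l * a)).
Proof. destruct x; simpl; intros; [nra | contradiction]. Qed.

Lemma ER_Fin_le_scale (l a : R) (x : ER) :
  0 < l -> ER_le (Fin a) x -> ER_le (Fin (l * a)) (ER_scale l x).
Proof.
  destruct x; simpl; intros; [nra|].
  destruct (Req_EM_T l 0); simpl; [lra | exact I].
Qed.

Lemma ER_le_INR_Inf (x : ER) : (forall k : nat, ER_le (Fin (INR k)) x) -> x = Inf.
Proof.
  destruct x as [r|]; intro Hx; [exfalso | reflexivity].
  destruct (INR_archimed 1 r ltac:(lra)) as [k Hk].
  specialize (Hx k); simpl in Hx. lra.
Qed.

Lemma ER_sup_le_Fin (S : ER -> Prop) (M : R) :
  (exists x, S x) -> (forall x, S x -> ER_le x (Fin M)) ->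
  exists s, ER_is_sup S s /\ ER_le s (Fin M).
Proof.
  intros [x0 Hx0] HM.
  set (E := fun r => S (Fin r)).
  assert (HE : bound E) by (exists M; intros r Hr; exact (HM _ Hr)).
  destruct x0 as [r0|]; [| specialize (HM _ Hx0); contradiction].
  destruct (completeness E HE (ex_intro _ r0 Hx0)) as [m [Hub Hlub]].
  assert (HS : forall x, S x -> exists r, x = Fin r /\ E r).
  { intros [r|] Hx; [now exists r | specialize (HM _ Hx); contradiction]. }
  exists (Fin m); split; [split|].
  - intros x Hx. destruct (HS x Hx) as [r [-> Hr]]. exact (Hub r Hr).
  - intros [u|] Hu; simpl; [| exact I].
    apply Hlub. intros r Hr. exact (Hu (Fin r) Hr).
  - apply Hlub. intros r Hr. exact (HM _ Hr).
Qed.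

Lemma ER_psum_le_geometric (f : nat -> ER) :
  (forall k, ER_le (f k) (Fin ((/2) ^ S k))) ->
  forall N, ER_le (ER_psum f N) (Fin (1 - (/2) ^ N)).
Proof.
  intros Hf N; induction N as [|N IH]; simpl; [lra|].
  replace (1 - / 2 * (/ 2) ^ N) with ((1 - (/2) ^ N) + / 2 * (/2) ^ N) by lra.
  exact (ER_add_le_Fin _ _ _ _ IH (Hf N)).
Qed.

Lemma ER_psum_le_one_geometric (f : nat -> ER) :
  (forall k, ER_le (f k) (Fin ((/2) ^ S k))) ->
  forall N, ER_le (ER_psum f N) (Fin 1).
Proof.
  intros Hf N. apply (ER_le_trans _ _ _ (ER_psum_le_geometric f Hf N)).
  simpl. pose proof (pow_lt (/2) N ltac:(lra)). lra.
Qed.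

Section Admissible.

Variables (V : Type) (vscal : R -> V -> V) (Phi : (V -> Prop) -> ER).
Hypothesis HPhi : admissible vscal Phi.

Lemma admissible_scale_nonneg (l : R) (A : V -> Prop) :
  0 <= l -> Phi (scale_set vscal l A) = ER_scale l (Phi A).
Proof.
  intro Hl. destruct HPhi as [_ [Hscale _]].
  rewrite Hscale, Rabs_pos_eq by exact Hl. reflexivity.
Qed.

Lemma admissible_le_bigUnion (A : nat -> V -> Prop) (k : nat) :
  ER_le (Phi (A k)) (Phi (bigUnion A)).
Proof.
  destruct HPhi as [_ [_ [Hmono _]]].
  apply Hmono. intros v Hv. now exists k.
Qed.

Lemma admissible_bigUnion_le_Fin (A : nat -> V -> Prop) (M : R) :
  (forall N, ER_le (ER_psum (fun n => Phi (A n)) N) (Fin M)) ->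
  ER_le (Phi (bigUnion A)) (Fin M).
Proof.
  intro HM. destruct HPhi as [_ [_ [_ Hsub]]].
  destruct (ER_sup_le_Fin (fun x => exists N, x = ER_psum (fun n => Phi (A n)) N) M)
    as [s [Hs HsM]].
  - now exists (ER_psum (fun n => Phi (A n)) 0), 0%nat.
  - intros x [N ->]. apply HM.
  - exact (ER_le_trans _ _ _ (Hsub A s Hs) HsM).
Qed.

End Admissible.

Lemma cv_infty_select (c : nat -> R) (M : nat -> R) :
  cv_infty c -> exists n : nat -> nat, forall k, M k < c (n k).
Proof.
  intro Hc.
  exists (fun k => proj1_sig (constructive_indefinite_description _ (Hc (M k)))).
  intro k. destruct (constructive_indefinite_description _ _) as [N HN]; simpl.
  apply HN. lia.
Qed.

Theorem mainTheorem4 (V : Type) (vzero : V) (vadd : V -> V -> V)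
  (vopp : V -> V) (vscal : R -> V -> V)
  (HV : is_vector_space V vzero vadd vopp vscal)
  (Phi1 Phi2 : (V -> Prop) -> ER)
  (H1 : admissible vscal Phi1) (H2 : admissible vscal Phi2)
  (c : nat -> R) (Hc_incr : Un_growing c) (Hc_inf : cv_infty c)
  (B : nat -> V -> Prop)
  (HB1 : forall n, ER_le (Phi1 (B n)) (Fin 1))
  (HB2 : forall n, ER_le (Fin (c n)) (Phi2 (B n))) :
  exists A : V -> Prop, ER_le (Phi1 A) (Fin 1) /\ Phi2 A = Inf.
Proof.
  set (w := fun k : nat => (/2) ^ S k).
  assert (Hw : forall k, 0 < w k) by (intro k; apply pow_lt; lra).
  destruct (cv_infty_select c (fun k => INR k / w k) Hc_inf) as [n Hn].
  set (A := fun k => scale_set vscal (w k) (B (n k))).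
  assert (HA : forall Phi, admissible vscal Phi ->
            forall k, Phi (A k) = ER_scale (w k) (Phi (B (n k)))).
  { intros Phi HPhi k. apply admissible_scale_nonneg; [exact HPhi | apply Rlt_le, Hw]. }
  exists (bigUnion A). split.
  - apply (admissible_bigUnion_le_Fin _ _ _ H1), ER_psum_le_one_geometric.
    intro k. rewrite HA by exact H1. rewrite <- (Rmult_1_r ((/2) ^ S k)).
    exact (ER_scale_le_Fin _ _ _ (Rlt_le _ _ (Hw k)) (HB1 (n k))).
  - apply ER_le_INR_Inf. intro k.
    refine (ER_le_trans _ _ _ _ (admissible_le_bigUnion _ _ _ H2 A k)).
    rewrite HA by exact H2.
    apply (ER_le_trans _ (Fin (w k * c (n k)))).
    + specialize (Hn k); specialize (Hw k); simpl.
      apply Rmult_lt_compat_l with (r := w k) in Hn; [| exact Hw].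
      field_simplify in Hn; lra.
    + exact (ER_Fin_le_scale _ _ _ (Hw k) (HB2 (n k))).
Qed.
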